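(* In the resource theory of unital maps on a $d$-dimensional Hilbert space with fixed orthonormal basis $\{\ket i\}_{i=1}^d$, let $C^k=\{\Pi^k/k\}$ and $C_2^k=\big(\{\ket i\bra i\}_{1\le i\le k}\big)^{\mathrm P}$ (the convex hull of the first $k$ basis projectors), for $1\le k\le d$. Then for every $k$, $C^k\to C_2^k$ and $C_2^k\to C^k$. In particular $\mathcal C_2=\{C_2^k\}_{k=1}^d\cup\{\Omega\}$ is a currency for $S^\Omega$ with value function $\mathrm{Val}(C_2^k)=\log d-\log k$, $\mathrm{Val}(\Omega)=0$.
   Context: $\Omega$ is the set of density operators on a Hilbert space of dimension $d$; $S^\Omega$ the set of its non-empty subsets; $\Pi^k=\sum_{i=1}^k\ket i\bra i$. Allowed transformations: $f_{\mathcal E}(V)=\{\mathcal E(\rho):\rho\in V\}$ for unital CPTP maps $\mathcal E$; $V\to W$ iff some such $\mathcal E$ has $\mathcal E(\rho)\in W$ for all $\rho\in V$. Logarithms base 2. A subset $\mathcal C$ is a currency for target $\mathcal S$ if (Order) any two elements of $\mathcal C$ are comparable under $\to$ and $\Omega\in\mathcal C$; (Universality) $\Omega\in\mathcal S$ and every $V\in\mathcal S$ has $C,C'\in\mathcal C$ with $C\to V$, $V\to C'$. A value function $\mathrm{Val}:\mathcal C\to\mathbb R_{\ge0}$ satisfies $\mathrm{Val}(C')\ge\mathrm{Val}(C)\iff C'\to C$ and $\mathrm{Val}(\Omega)=0$. *)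

From HB Require Import structures.
From mathcomp Require Import all_boot all_order all_algebra.
From Stdlib Require Rdefinitions Raxioms Rpower.
Set Implicit Arguments. Unset Strict Implicit. Unset Printing Implicit Defensive.
Import Order.TTheory GRing.Theory Num.Theory.
Local Open Scope ring_scope.

Section QRT.
Variables (C : numClosedFieldType) (d : nat).

Definition adjmx m n (A : 'M[C]_(m, n)) : 'M[C]_(n, m) := (map_mx Num.conj A)^T.

Definition psd n (A : 'M[C]_n) : Prop :=
  forall v : 'cV[C]_n, 0 <= (adjmx v *m A *m v) 0 0.

Definition mset := 'M[C]_d -> Prop.
Definition Omega : mset := fun rho => psd rho /\ \tr rho = 1.

(* complete positivity: for every n, id_n (x) E maps psd (n x n block)
   matrices to psd matrices *)
Definition completely_positive (E : 'M[C]_d -> 'M[C]_d) : Prop :=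
  forall (n : nat) (X : 'I_n -> 'I_n -> 'M[C]_d),
    psd (\mxblock_(i < n, j < n) X i j) ->
    psd (\mxblock_(i < n, j < n) E (X i j)).

Definition unital_CPTP (E : 'M[C]_d -> 'M[C]_d) : Prop :=
  (forall (a : C) (x y : 'M[C]_d), E (a *: x + y) = a *: E x + E y) /\
  completely_positive E /\
  (forall rho, \tr (E rho) = \tr rho) /\
  E 1%:M = 1%:M.

Definition arrow (V W : mset) : Prop :=
  exists E, unital_CPTP E /\ forall rho, V rho -> W (E rho).

Definition SOmega (V : mset) : Prop :=
  (forall rho, V rho -> Omega rho) /\ exists rho, V rho.

(* Pi^k = sum_{i<k} |i><i| (basis indexed 0..d-1) *)
Definition Pi (k : nat) : 'M[C]_d :=
  \sum_(i < d | (i < k)%N) delta_mx i i.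

Definition Ck (k : nat) : mset := fun rho => rho = (k%:R)^-1 *: Pi k.

Definition C2k (k : nat) : mset := fun rho =>
  exists p : 'I_d -> C,
    (forall i, 0 <= p i) /\ \sum_(i < d | (i < k)%N) p i = 1 /\
    rho = \sum_(i < d | (i < k)%N) p i *: delta_mx i i.

Definition C2fam (V : mset) : Prop :=
  V = Omega \/ exists k, (1 <= k <= d)%N /\ V = C2k k.

Definition currency (Cf S : mset -> Prop) : Prop :=
  ((forall V W, Cf V -> Cf W -> arrow V W \/ arrow W V) /\ Cf Omega) /\
  (S Omega /\ forall V, S V -> exists W W', Cf W /\ Cf W' /\ arrow W V /\ arrow V W').

Definition value_function (Cf : mset -> Prop) (Val : mset -> Rdefinitions.R) : Prop :=
  (forall V, Cf V -> Rdefinitions.Rle Rdefinitions.R0 (Val V)) /\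
  (forall V W, Cf V -> Cf W -> (Rdefinitions.Rge (Val W) (Val V) <-> arrow W V)) /\
  Val Omega = Rdefinitions.R0.

End QRT.

Definition log2 (x : Rdefinitions.R) : Rdefinitions.R :=
  Rdefinitions.Rdiv (Rpower.ln x) (Rpower.ln (Raxioms.INR 2)).

From HB Require Import structures.
From mathcomp Require Import all_boot all_order all_algebra perm ring.
From Stdlib Require Rdefinitions Raxioms RIneq Rpower Lra ClassicalEpsilon.
Set Implicit Arguments. Unset Strict Implicit. Unset Printing Implicit Defensive.
Import Order.TTheory GRing.Theory Num.Theory.
Local Open Scope ring_scope.

(* Everything hinges on one index: for [1 <= a, b <= d], [C_2^a -> C_2^b] holds
   exactly when [a <= b], and [Omega] is interchangeable with [C_2^d].
   Sufficiency is witnessed by the twirl channel, which sends [C_2^a] ([a <= k]),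
   and for [k = d] all of [Omega], to [Pi^k / k]; this also gives [C_2^k -> C^k].
   Necessity: a unital channel maps [Pi^a] to a matrix of trace [a] whose diagonal
   entries are at most 1, since [1 - Pi^a] stays positive; if it maps every
   [|i><i|], [i < a], to a state supported on the first [b] basis vectors, then
   [a <= b]. Universality: [C_2^1] is the single pure state [|0><0|], and any state
   [rho = U^* diag(lambda) U] is reached from it by a mixture of unitaries weighted
   by [lambda]. Finally [log d - log k] decreases with [k]. *)

Section PositiveSemidefinite.
Context {C : numClosedFieldType}.
Implicit Types (m n p : nat).

Lemma adjmxE m n (A : 'M[C]_(m, n)) : adjmx A = (A ^t Num.conj)%sesqui.
Proof. by rewrite /adjmx map_trmx. Qed.

Lemma adjmxM m n p (A : 'M[C]_(m, n)) (B : 'M[C]_(n, p)) :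
  adjmx (A *m B) = adjmx B *m adjmx A.
Proof. by rewrite /adjmx map_mxM trmx_mul. Qed.

Lemma adjmxK m n (A : 'M[C]_(m, n)) : adjmx (adjmx A) = A.
Proof. by apply/matrixP=> i j; rewrite !mxE conjCK. Qed.

Lemma adjmxD m n (A B : 'M[C]_(m, n)) : adjmx (A + B) = adjmx A + adjmx B.
Proof. by apply/matrixP=> i j; rewrite !mxE rmorphD. Qed.

Lemma adjmxZ m n a (A : 'M[C]_(m, n)) : adjmx (a *: A) = a^* *: adjmx A.
Proof. by apply/matrixP=> i j; rewrite !mxE rmorphM. Qed.

Lemma adjmx_delta m n (i : 'I_m) (j : 'I_n) :
  adjmx (delta_mx i j : 'M[C]_(m, n)) = delta_mx j i.
Proof. by apply/matrixP=> a b; rewrite !mxE rmorph_nat andbC. Qed.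

Lemma adjmx_mxdiag p (p_ : 'I_p -> nat) (B_ : forall i, 'M[C]_(p_ i)) :
  adjmx (\mxdiag_i B_ i) = \mxdiag_i adjmx (B_ i).
Proof.
rewrite /adjmx -tr_mxdiag; congr (_^T); apply/matrixP=> s t; rewrite !mxE.
case: eqVneq => [e|_]; last by rewrite !mxE conjC0.
have := map_conform_mx Num.conj (B_ (tagnat.sig1 s))
  (0 : 'M[C]_(p_ (tagnat.sig1 s), p_ (tagnat.sig1 t))).
by rewrite map_mx0 => <-; rewrite mxE.
Qed.

Lemma quad_deltaE n (A : 'M[C]_n) (a b : 'I_n) :
  (adjmx (delta_mx a 0 : 'cV[C]_n) *m A *m (delta_mx b 0 : 'cV[C]_n)) 0 0 = A a b.
Proof. by rewrite adjmx_delta -(rowE a A) -(colE b) !mxE. Qed.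

Lemma delta_mx_sandwich n (a b : 'I_n) (X : 'M[C]_n) :
  delta_mx a b *m X *m adjmx (delta_mx a b) = X b b *: delta_mx a a.
Proof.
rewrite adjmx_delta -(mul_delta_mx (0 : 'I_1) a b) -(mul_delta_mx (0 : 'I_1) b a).
rewrite !mulmxA -(mulmxA _ _ X) -rowE -(mulmxA _ _ (delta_mx b 0)) -colE.
rewrite [col b _]mx11_scalar !mxE mul_mx_scalar -scalemxAl.
by rewrite mul_delta_mx.
Qed.

Lemma psd_conj m n (M : 'M[C]_(m, n)) (A : 'M[C]_n) :
  psd A -> psd (M *m A *m adjmx M).
Proof. by move=> hA v; have := hA (adjmx M *m v); rewrite adjmxM adjmxK !mulmxA. Qed.

Lemma psdD n (A B : 'M[C]_n) : psd A -> psd B -> psd (A + B).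
Proof. by move=> hA hB v; rewrite mulmxDr mulmxDl mxE addr_ge0. Qed.

Lemma psdZ n c (A : 'M[C]_n) : 0 <= c -> psd A -> psd (c *: A).
Proof. by move=> hc hA v; rewrite -scalemxAr -scalemxAl mxE mulr_ge0. Qed.

Lemma psd_sum n (I : finType) (P : pred I) (F : I -> 'M[C]_n) :
  (forall i, P i -> psd (F i)) -> psd (\sum_(i | P i) F i).
Proof.
move=> hF; elim/big_ind: _ => //; last exact: psdD.
by move=> v; rewrite mulmx0 mul0mx mxE.
Qed.

Lemma psd1 n : psd (1%:M : 'M[C]_n).
Proof.
move=> v; rewrite mulmx1 !mxE; apply: sumr_ge0 => k _.
by rewrite !mxE mulrC mul_conjC_ge0.
Qed.

Lemma psd_diag_ge0 n (A : 'M[C]_n) i : psd A -> 0 <= A i i.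
Proof. by move=> hA; rewrite -quad_deltaE. Qed.

Lemma psd_delta n (i : 'I_n) : psd (delta_mx i i : 'M[C]_n).
Proof.
have -> : delta_mx i i = delta_mx i 0 *m 1%:M *m adjmx (delta_mx i 0 : 'cV[C]_n).
  by rewrite mulmx1 adjmx_delta mul_delta_mx.
exact/psd_conj/psd1.
Qed.

(* Polarization: the quadratic form of [A] at [e_i + c e_j] is real for every [c]. *)
Lemma psd_hermitian n (A : 'M[C]_n) (i j : 'I_n) : psd A -> A j i = (A i j)^*.
Proof.
move=> hA; set a := A i j; set b := A j i.
have real_cross c : (c * a + c^* * b)^* = c * a + c^* * b.
  have [/geC0_conj ii /geC0_conj jj] := (psd_diag_ge0 i hA, psd_diag_ge0 j hA).
  have := geC0_conj (hA (delta_mx i 0 + c *: delta_mx j 0)).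
  rewrite adjmxD adjmxZ !mulmxDl !mulmxDr -!scalemxAl -!scalemxAr.
  rewrite 3![((_ + _ : 'M[C]_1) 0 0)]mxE 4![((_ *: _ : 'M[C]_1) 0 0)]mxE.
  rewrite !quad_deltaE -/a -/b.
  rewrite !rmorphD !rmorphM /= conjCK ii jj => e.
  apply: (@addrI _ (A i i + c^* * (c * A j j))).
  transitivity (A i i + c^* * a^* + (c * b^* + c * (c^* * A j j))); first by ring.
  by rewrite e; ring.
have := real_cross 1; have := real_cross 'i.
rewrite !rmorphD !rmorphM /= !conjCK conjC1 conjCi !mul1r => ei e1.
have e2 : b^* - a^* = a - b.
  apply: (mulfI (neq0Ci C)); transitivity (- 'i * a^* + 'i * b^*); first by ring.
  by rewrite ei; ring.
rewrite -[b]conjCK; congr (_^*); apply: (@mulfI _ 2%:R); first by rewrite pnatr_eq0.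
transitivity ((a^* + b^*) + (b^* - a^*)); first by ring.
by rewrite e1 e2; ring.
Qed.

Lemma psd_normalmx n (A : 'M[C]_n) : psd A -> A \is normalmx.
Proof.
move=> hA; apply: hermitian_normalmx; apply/is_hermitianmxP.
by apply/matrixP=> i j; rewrite expr0 scale1r !mxE (psd_hermitian j i hA).
Qed.

Lemma psd_spectral n (A : 'M[C]_n) : psd A ->
  exists (U : 'M[C]_n) (lam : 'I_n -> C),
    [/\ adjmx U *m U = 1%:M, A = adjmx U *m (\sum_i lam i *: delta_mx i i) *m U,
        forall i, 0 <= lam i & \sum_i lam i = \tr A].
Proof.
move=> hA; have /orthomx_spectralP eA := psd_normalmx hA.
set U := spectralmx A in eA; set sp := spectral_diag A in eA.
have UU : U *m adjmx U = 1%:M by rewrite adjmxE; apply/unitarymxP/spectral_unitarymx.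
have UU' := mulmx1C UU.
rewrite invmx_unitary ?spectral_unitarymx // -adjmxE in eA.
have eD : diag_mx sp = U *m A *m adjmx U.
  by rewrite eA !mulmxA UU mul1mx -mulmxA UU mulmx1.
exists U, (fun i => sp 0 i); split => //.
- by rewrite -diag_mx_sum_delta.
- by move=> i; have := psd_diag_ge0 i (psd_conj U hA); rewrite -eD mxE eqxx mulr1n.
rewrite -[in RHS](mul1mx A) -UU' -mulmxA mxtrace_mulC -eD.
by apply: eq_bigr => i _; rewrite mxE eqxx mulr1n.
Qed.

End PositiveSemidefinite.

Section Channels.
Context {C : numClosedFieldType} {d : nat}.
Implicit Types (X rho : 'M[C]_d) (E F : 'M[C]_d -> 'M[C]_d) (V W : mset C d).

Definition kraus (I : finType) (c : I -> C) (M : I -> 'M[C]_d) X : 'M[C]_d :=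
  \sum_i c i *: (M i *m X *m adjmx (M i)).

Section Kraus.
Variables (I : finType) (c : I -> C) (M : I -> 'M[C]_d).
Hypothesis c_ge0 : forall i, 0 <= c i.

Lemma kraus_linear a X Y : kraus c M (a *: X + Y) = a *: kraus c M X + kraus c M Y.
Proof.
rewrite /kraus scaler_sumr -big_split /=; apply: eq_bigr => i _.
by rewrite mulmxDr mulmxDl -scalemxAr -scalemxAl scalerDr !scalerA mulrC.
Qed.

Lemma kraus_CP : completely_positive (kraus c M).
Proof.
move=> n X hX.
have -> : \mxblock_(i < n, j < n) kraus c M (X i j) =
  \sum_k c k *: (\mxdiag_(i < n) M k *m \mxblock_(i < n, j < n) X i j
                 *m adjmx (\mxdiag_(i < n) M k)).
  under [RHS]eq_bigr do rewrite adjmx_mxdiag mul_mxdiag_mxblock mul_mxblock_mxdiag.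
  by apply/matrixP=> s t; rewrite !mxE /kraus !summxE; apply: eq_bigr => k _; rewrite !mxE.
by apply: psd_sum => k _; apply/psdZ/psd_conj.
Qed.

Lemma kraus_trace : \sum_i c i *: (adjmx (M i) *m M i) = 1%:M ->
  forall X, \tr (kraus c M X) = \tr X.
Proof.
move=> TP X; rewrite -{2}[X]mulmx1 -TP mulmx_sumr !raddf_sum /=.
apply: eq_bigr => i _.
by rewrite -scalemxAr !mxtraceZ -mulmxA mxtrace_mulC mulmxA.
Qed.

Lemma kraus_unital_CPTP :
  \sum_i c i *: (adjmx (M i) *m M i) = 1%:M ->
  \sum_i c i *: (M i *m adjmx (M i)) = 1%:M ->
  unital_CPTP (kraus c M).
Proof.
move=> TP U; split; first exact: kraus_linear.
split; first exact: kraus_CP.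
split; first exact: kraus_trace.
by rewrite /kraus -{2}U; apply: eq_bigr => i _; rewrite mulmx1.
Qed.

End Kraus.

Lemma unitary_mixture_unital_CPTP (I : finType) (c : I -> C) (M : I -> 'M[C]_d) :
  (forall i, 0 <= c i) -> \sum_i c i = 1 -> (forall i, adjmx (M i) *m M i = 1%:M) ->
  unital_CPTP (kraus c M).
Proof.
move=> c_ge0 c1 MM; have MM' i := mulmx1C (MM i).
apply: kraus_unital_CPTP => //.
  by under eq_bigr do rewrite MM; rewrite -scaler_suml c1 scale1r.
by under eq_bigr do rewrite MM'; rewrite -scaler_suml c1 scale1r.
Qed.

Lemma unital_CPTP_id : unital_CPTP (@id 'M[C]_d).
Proof. by do 3?split. Qed.

Lemma unital_CPTP_comp E F : unital_CPTP E -> unital_CPTP F -> unital_CPTP (F \o E).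
Proof.
move=> [linE [cpE [trE unE]]] [linF [cpF [trF unF]]]; split; last split.
- by move=> a X Y /=; rewrite linE linF.
- by move=> n X /cpE /cpF.
by split=> [X|] /=; rewrite ?trF ?trE ?unE ?unF.
Qed.

Section UnitalChannel.
Variable E : 'M[C]_d -> 'M[C]_d.
Hypothesis chE : unital_CPTP E.

Lemma channel0 : E 0 = 0.
Proof. by have := chE.1 (-1) 0 0; rewrite scaler0 addr0 scaleN1r addNr. Qed.

Lemma channelD X Y : E (X + Y) = E X + E Y.
Proof. by rewrite -[X]scale1r chE.1 !scale1r. Qed.

Lemma channelZ a X : E (a *: X) = a *: E X.
Proof. by rewrite -[a *: X]addr0 chE.1 channel0 addr0. Qed.

Lemma channel_sum (J : finType) (P : pred J) (F : J -> 'M[C]_d) :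
  E (\sum_(j | P j) F j) = \sum_(j | P j) E (F j).
Proof. exact: (big_morph E channelD channel0). Qed.

Lemma channel_trace X : \tr (E X) = \tr X.
Proof. by case: chE => _ [_ []]. Qed.

Lemma channel1 : E 1%:M = 1%:M.
Proof. by case: chE => _ [_ []]. Qed.

(* [n = 1] in the definition of complete positivity, through the block embedding. *)
Lemma channel_psd X : psd X -> psd (E X).
Proof.
move=> hX; have cpE := chE.2.1.
pose Cm := \mxcol_(i < 1) (1%:M : 'M[C]_d).
have CmE : adjmx Cm = \mxrow_(j < 1) (1%:M : 'M[C]_d).
  apply/matrixP => s t; rewrite !mxE; case: (tagnat.sig1 t) => -[|] // ?.
  by rewrite rmorph_nat eq_sym.
have blockE (Y : 'M[C]_d) : \mxblock_(i < 1, j < 1) Y = Cm *m Y *m adjmx Cm.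
  rewrite CmE mxcol_mul mul_mxcol_mxrow.
  by apply: eq_mxblock => i j; rewrite mul1mx mulmx1.
have CmK : adjmx Cm *m Cm = 1%:M by rewrite CmE mul_mxrow_mxcol big_ord1 mulmx1.
have := cpE 1%N (fun _ _ => X); rewrite !blockE => /(_ (psd_conj Cm hX)).
by move/(psd_conj (adjmx Cm)); rewrite adjmxK !mulmxA CmK mul1mx -mulmxA CmK mulmx1.
Qed.

End UnitalChannel.

Lemma arrow_sub V W : (forall rho, V rho -> W rho) -> arrow V W.
Proof. by move=> VW; exists id; split; [exact: unital_CPTP_id|]. Qed.

Lemma arrow_trans V W U : arrow V W -> arrow W U -> arrow V U.
Proof.
move=> [E [chE VW]] [F [chF WU]]; exists (F \o E).
by split; [exact: unital_CPTP_comp | move=> rho /VW /WU].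
Qed.

End Channels.

Lemma sum_pairE (R : nmodType) (I J : finType) (F : I * J -> R) :
  \sum_p F p = \sum_i \sum_j F (i, j).
Proof. by rewrite pair_bigA; apply: eq_bigr => -[]. Qed.

Section DiagonalStates.
Context {C : numClosedFieldType} {d : nat}.
Implicit Types (X rho : 'M[C]_d).

Lemma sum_delta_diag (P : pred 'I_d) (f : 'I_d -> C) j :
  (\sum_(i | P i) f i *: delta_mx i i : 'M[C]_d) j j = if P j then f j else 0.
Proof.
rewrite summxE big_mkcond (bigD1 j) //= big1 ?addr0 => [|i ij].
  by case: ifP; rewrite // !mxE eqxx mulr1.
by case: ifP; rewrite // !mxE eq_sym (negbTE ij) mulr0.
Qed.

Lemma mxtrace_delta (i : 'I_d) : \tr (delta_mx i i : 'M[C]_d) = 1.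
Proof.
rewrite /mxtrace (bigD1 i) //= big1 ?mxE ?eqxx ?addr0 // => j ji.
by rewrite mxE (negbTE ji).
Qed.

Lemma sum1_ord_lt (k : nat) : (k <= d)%N -> \sum_(i < d | (i < k)%N) 1 = k%:R :> C.
Proof. by move=> kd; rewrite -(big_ord_widen _ (fun=> 1)) // sumr_const card_ord. Qed.

Definition stochastic_channel (w : 'I_d -> 'I_d -> C) : 'M[C]_d -> 'M[C]_d :=
  kraus (fun p : 'I_d * 'I_d => w p.1 p.2) (fun p => delta_mx p.1 p.2).

Lemma stochastic_channelE w X :
  stochastic_channel w X = \sum_i (\sum_j w i j * X j j) *: delta_mx i i.
Proof.
rewrite /stochastic_channel /kraus sum_pairE; apply: eq_bigr => i _ /=.
by rewrite scaler_suml; apply: eq_bigr => j _; rewrite delta_mx_sandwich scalerA.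
Qed.

Lemma stochastic_channel_unital_CPTP w : (forall i j, 0 <= w i j) ->
  (forall i, \sum_j w i j = 1) -> (forall j, \sum_i w i j = 1) ->
  unital_CPTP (stochastic_channel w).
Proof.
move=> w_ge0 row1 col1; apply: kraus_unital_CPTP => [[i j] //||].
- rewrite sum_pairE exchange_big mx1_sum_delta; apply: eq_bigr => j _ /=.
  under eq_bigr do rewrite adjmx_delta mul_delta_mx.
  by rewrite -scaler_suml col1 scale1r.
- rewrite sum_pairE mx1_sum_delta; apply: eq_bigr => i _ /=.
  under eq_bigr do rewrite adjmx_delta mul_delta_mx.
  by rewrite -scaler_suml row1 scale1r.
Qed.

(* The twirl averages the first [k] diagonal entries and dephases the others. *)
Definition twirl_weight (k : nat) (i j : 'I_d) : C :=
  if (i < k)%N && (j < k)%N then k%:R^-1 else (i == j)%:R.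

Lemma twirl_weightC k i j : twirl_weight k i j = twirl_weight k j i.
Proof. by rewrite /twirl_weight andbC eq_sym. Qed.

Lemma twirl_weight_sum k i (f : 'I_d -> C) :
  \sum_j twirl_weight k i j * f j =
  if (i < k)%N then k%:R^-1 * \sum_(j < d | (j < k)%N) f j else f i.
Proof.
rewrite /twirl_weight; case: ifP => ik /=.
  rewrite mulr_sumr [RHS]big_mkcond; apply: eq_bigr => j _ /=.
  case: ifP => jk; rewrite ?mul0r //.
  by case: eqP => [e|_]; [rewrite -e ik in jk | rewrite mul0r].
rewrite (bigD1 i) //= eqxx mul1r big1 ?addr0 // => j ji.
by rewrite eq_sym (negbTE ji) mul0r.
Qed.

Lemma twirl_weight_row1 k i : (0 < k <= d)%N -> \sum_j twirl_weight k i j = 1.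
Proof.
case/andP=> k_gt0 kd; have := twirl_weight_sum k i (fun=> 1).
under eq_bigr do rewrite mulr1.
by move=> ->; case: ifP => // _; rewrite sum1_ord_lt // mulVf // pnatr_eq0 -lt0n.
Qed.

Definition twirl (k : nat) := stochastic_channel (twirl_weight k).

Lemma twirl_unital_CPTP k : (0 < k <= d)%N -> unital_CPTP (twirl k).
Proof.
move=> hk; apply: stochastic_channel_unital_CPTP => [i j||j].
- by rewrite /twirl_weight; case: ifP; rewrite ?invr_ge0 ler0n.
- by move=> i; apply: twirl_weight_row1.
by under eq_bigr do rewrite twirl_weightC; apply: twirl_weight_row1.
Qed.

Lemma twirl_uniform k rho : (forall i : 'I_d, (k <= i)%N -> rho i i = 0) ->
  \sum_(i < d | (i < k)%N) rho i i = 1 -> twirl k rho = k%:R^-1 *: Pi C d k.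
Proof.
move=> rho_out rho_in; rewrite /twirl stochastic_channelE /Pi scaler_sumr [RHS]big_mkcond.
apply: eq_bigr => i _; rewrite twirl_weight_sum rho_in mulr1.
by case: ltnP => // /rho_out ->; rewrite scale0r.
Qed.

Lemma mxtrace_Pi k : (k <= d)%N -> \tr (Pi C d k) = k%:R.
Proof.
by move=> kd; rewrite raddf_sum /=; under eq_bigr do rewrite mxtrace_delta; rewrite sum1_ord_lt.
Qed.

Lemma C2k_diag_out a rho : C2k a rho -> forall i : 'I_d, (a <= i)%N -> rho i i = 0.
Proof. by move=> [p [_ [_ ->]]] i ai; rewrite sum_delta_diag ltnNge ai. Qed.

Lemma C2k_diag_in a k rho : (a <= k)%N -> C2k a rho -> \sum_(i < d | (i < k)%N) rho i i = 1.
Proof.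
move=> ak [p [_ [p1 ->]]]; under eq_bigr do rewrite sum_delta_diag.
rewrite -big_mkcondr -p1; apply: eq_bigl => i /=.
by case: (ltnP i a) => [ia|]; rewrite ?andbT ?andbF // (leq_trans ia ak).
Qed.

Lemma Ck_sub_C2k k rho : (0 < k <= d)%N -> Ck k rho -> C2k k rho.
Proof.
case/andP=> k_gt0 kd ->; exists (fun=> k%:R^-1); split=> [i|]; first by rewrite invr_ge0.
split; last by rewrite /Pi scaler_sumr.
under eq_bigr do rewrite -[k%:R^-1]mulr1.
by rewrite -mulr_sumr sum1_ord_lt // mulVf // pnatr_eq0 -lt0n.
Qed.

Lemma C2k_sub_Omega a rho : C2k a rho -> Omega rho.
Proof.
move=> [p [p_ge0 [p1 ->]]]; split; first by apply: psd_sum => i _; apply/psdZ/psd_delta.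
rewrite raddf_sum -p1; apply: eq_bigr => i _.
by rewrite /= mxtraceZ mxtrace_delta mulr1.
Qed.

Lemma delta_mx_C2k a (i : 'I_d) : (i < a)%N -> C2k a (delta_mx i i : 'M[C]_d).
Proof.
move=> ia; exists (fun j => (j == i)%:R); split=> [j|]; first exact: ler0n.
by split; rewrite (bigD1 i) //= big1 ?eqxx ?scale1r ?addr0 // => j /andP[_ /negbTE ->];
   rewrite ?scale0r.
Qed.

End DiagonalStates.

Section Preparation.
Context {C : numClosedFieldType} {d : nat}.

Lemma adjmx_tperm (z j : 'I_d) : adjmx (tperm_mx z j : 'M[C]_d) = tperm_mx z j.
Proof. by rewrite /adjmx map_tperm_mx tr_tperm_mx. Qed.

Lemma tperm_mxK (z j : 'I_d) : tperm_mx z j *m tperm_mx z j = 1%:M :> 'M[C]_d.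
Proof. by rewrite -perm_mxM tperm2 perm_mx1. Qed.

Lemma tperm_mx_delta (z j : 'I_d) :
  tperm_mx z j *m delta_mx z z *m tperm_mx z j = delta_mx j j :> 'M[C]_d.
Proof.
apply/matrixP=> s t; rewrite -xrowE -xcolE !mxE.
by rewrite !(canF_eq (tpermK z j)) tpermL.
Qed.

(* Mixing the unitaries [U^* P_j], with [P_j] the transposition of [z] and [j],
   according to the spectrum of [rho] prepares [rho] from [|z><z|]. *)
Lemma prepare_state (z : 'I_d) (rho : 'M[C]_d) :
  Omega rho -> exists E, unital_CPTP E /\ E (delta_mx z z) = rho.
Proof.
move=> [rho_psd tr1]; have [U [lam [UU rhoE lam_ge0 lam1]]] := psd_spectral rho_psd.
have UU' := mulmx1C UU.
pose M j := adjmx U *m tperm_mx z j.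
exists (kraus lam M); split.
  apply: unitary_mixture_unital_CPTP => [//||j]; first by rewrite lam1.
  by rewrite adjmxM adjmxK adjmx_tperm mulmxA -(mulmxA _ U) UU' mulmx1 tperm_mxK.
rewrite rhoE /kraus mulmx_sumr mulmx_suml; apply: eq_bigr => j _.
rewrite /M adjmxM adjmxK adjmx_tperm !mulmxA -2!(mulmxA (adjmx U)) tperm_mx_delta.
by rewrite -scalemxAr -scalemxAl.
Qed.

End Preparation.

Section ResourceOrder.
Context {C : numClosedFieldType} {d : nat}.
Implicit Types (rho : 'M[C]_d) (V : mset C d).

Lemma twirl_C2k a k rho : (a <= k)%N -> C2k a rho -> twirl k rho = k%:R^-1 *: Pi C d k.
Proof.
move=> ak rhoa; apply: twirl_uniform; last exact: C2k_diag_in rhoa.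
by move=> i ki; apply: C2k_diag_out rhoa _ (leq_trans ak ki).
Qed.

Lemma arrow_Ck_C2k_equiv k : (0 < k <= d)%N ->
  arrow (@Ck C d k) (C2k k) /\ arrow (@C2k C d k) (Ck k).
Proof.
move=> hk; split; first by apply: arrow_sub => rho; apply: Ck_sub_C2k.
exists (twirl k); split; first exact: twirl_unital_CPTP.
by move=> rho /(twirl_C2k (leqnn k)).
Qed.

Lemma arrow_C2k_leq a b : (a <= b)%N -> (0 < b <= d)%N -> arrow (@C2k C d a) (C2k b).
Proof.
move=> ab hb; exists (twirl b); split; first exact: twirl_unital_CPTP.
by move=> rho /(twirl_C2k ab) e; apply: Ck_sub_C2k.
Qed.

Lemma arrow_Omega_C2k : (0 < d)%N -> arrow (@Omega C d) (C2k d).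
Proof.
move=> d_gt0; exists (twirl d); split; first by apply: twirl_unital_CPTP; rewrite d_gt0 /=.
move=> rho [_ tr1]; apply: Ck_sub_C2k; first by rewrite d_gt0 /=.
apply: twirl_uniform => [i|]; first by rewrite leqNgt ltn_ord.
by rewrite -tr1; apply: eq_bigl => i; rewrite ltn_ord.
Qed.

Lemma leq_of_arrow_C2k a b : (a <= d)%N -> arrow (@C2k C d a) (C2k b) -> (a <= b)%N.
Proof.
move=> ad [E [chE hE]]; have [db|bd] := ltnP d b; first exact: ltnW (leq_ltn_trans ad db).
pose Y := E (Pi C d a).
have trY : \tr Y = a%:R by rewrite channel_trace // mxtrace_Pi.
have Y_out (l : 'I_d) : (b <= l)%N -> Y l l = 0.
  move=> bl; rewrite /Y channel_sum // summxE big1 // => i ia.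
  exact: C2k_diag_out (hE _ (delta_mx_C2k ia)) _ bl.
have Y_le1 (l : 'I_d) : Y l l <= 1.
  have compl_Pi : 1%:M - Pi C d a = \sum_(i < d | ~~ (i < a)%N) delta_mx i i.
    by rewrite /Pi mx1_sum_delta (bigID (fun i : 'I_d => (i < a)%N)) /= addrAC subrr add0r.
  have : psd (1%:M - Pi C d a) by rewrite compl_Pi; apply: psd_sum => i _; apply: psd_delta.
  move/(channel_psd chE)/(psd_diag_ge0 l).
  rewrite channelD // -scaleN1r channelZ // channel1 // scaleN1r.
  by rewrite !mxE eqxx subr_ge0.
have : a%:R <= b%:R :> C.
  rewrite -trY -(sum1_ord_lt bd) /mxtrace (bigID (fun l : 'I_d => (l < b)%N)) /=.
  rewrite [X in _ + X]big1 => [|l]; last by rewrite -leqNgt; apply: Y_out.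
  by rewrite addr0; apply: ler_sum => l _; apply: Y_le1.
by rewrite ler_nat.
Qed.

End ResourceOrder.

Section Currency.
Context {C : numClosedFieldType} {d : nat}.
Hypothesis d_gt0 : (0 < d)%N.
Implicit Types (rho : 'M[C]_d) (V W : mset C d).

Lemma C2k1_delta rho : C2k 1 rho -> rho = delta_mx (Ordinal d_gt0) (Ordinal d_gt0).
Proof.
have only0 (i : 'I_d) : (i < 1)%N = (i == Ordinal d_gt0).
  by rewrite -val_eqE /= ltnS leqn0.
move=> [p [_ []]]; rewrite !(eq_bigl _ _ only0) !big_pred1_eq => -> ->.
by rewrite scale1r.
Qed.

Lemma arrow_C2k1 V : SOmega V -> arrow (C2k 1) V.
Proof.
move=> [VO [rho Vrho]]; have [E [chE Erho]] := prepare_state (Ordinal d_gt0) (VO _ Vrho).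
by exists E; split=> // _ /C2k1_delta ->; rewrite Erho.
Qed.

Definition C2_at (k : nat) V := ((0 < k <= d)%N /\ V = C2k k) \/ (k = d /\ V = @Omega C d).

Lemma C2famP V : C2fam V <-> exists k, C2_at k V.
Proof.
split=> [[->|[k [hk ->]]]|[k [[hk ->]|[_ ->]]]].
- by exists d; right.
- by exists k; left.
- by right; exists k.
by left.
Qed.

Lemma C2_at_equiv k V : C2_at k V -> arrow V (C2k k) /\ arrow (C2k k) V.
Proof.
case=> [[_ ->]|[-> ->]]; first by split; apply: arrow_sub.
by split; [exact: arrow_Omega_C2k | apply: arrow_sub => rho; apply: C2k_sub_Omega].
Qed.

Lemma C2_at_range k V : C2_at k V -> (0 < k <= d)%N.
Proof. by case=> [[]|[-> _]] //; rewrite d_gt0 /=. Qed.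

Lemma arrow_C2_atP a b V W : C2_at a V -> C2_at b W -> arrow V W <-> (a <= b)%N.
Proof.
move=> Va Wb; have [/andP[_ ad] hb] := (C2_at_range Va, C2_at_range Wb).
have [[VC CV] [WC CW]] := (C2_at_equiv Va, C2_at_equiv Wb).
split=> [VW | ab]; first exact: leq_of_arrow_C2k ad (arrow_trans CV (arrow_trans VW WC)).
exact: arrow_trans VC (arrow_trans (arrow_C2k_leq ab hb) CW).
Qed.

Lemma C2_at_inj a b V : C2_at a V -> C2_at b V -> a = b.
Proof.
move=> Va Vb; have VV : arrow V V by apply: arrow_sub.
by apply/eqP; rewrite eqn_leq (proj1 (arrow_C2_atP Va Vb) VV) (proj1 (arrow_C2_atP Vb Va) VV).
Qed.

Lemma C2fam_currency : currency (@C2fam C d) (@SOmega C d).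
Proof.
split; split.
- move=> V W /C2famP[a Va] /C2famP[b Wb].
  have [ab|/ltnW ba] := leqP a b; [left | right].
    exact/(arrow_C2_atP Va Wb).
  exact/(arrow_C2_atP Wb Va).
- by left.
- split=> //; exists (delta_mx (Ordinal d_gt0) (Ordinal d_gt0)).
  exact/(C2k_sub_Omega (a := 1))/delta_mx_C2k.
move=> V SV; exists (C2k 1), (@Omega C d); split; first by right; exists 1%N; rewrite d_gt0.
split; first by left.
by split; [exact: arrow_C2k1 | apply: arrow_sub; case: SV].
Qed.

End Currency.

Section Log2.
Import Rdefinitions Raxioms RIneq Rpower Lra.
Local Open Scope R_scope.

Lemma log2_le_iff (a b : nat) : (0 < a)%nat -> (0 < b)%nat ->
  log2 (INR a) <= log2 (INR b) <-> (a <= b)%nat.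
Proof.
move=> /ssrnat.ltP a_gt0 /ssrnat.ltP b_gt0.
have ln2_gt0 : 0 < ln (INR 2) by rewrite -ln_1; apply: ln_increasing; simpl; lra.
have [pa pb] : 0 < INR a /\ 0 < INR b by split; apply: lt_0_INR.
rewrite /log2 /Rdiv; split => [h|/ssrnat.leP/le_INR ab].
- apply/ssrnat.leP/INR_le; apply: Rnot_lt_le => ba.
  have := ln_increasing _ _ pb ba.
  have := Rmult_le_reg_r _ _ _ (Rinv_0_lt_compat _ ln2_gt0) h; lra.
- apply: Rmult_le_compat_r; first exact/Rlt_le/Rinv_0_lt_compat.
  by case: (Rle_lt_or_eq_dec _ _ ab) => [/(ln_increasing _ _ pa)/Rlt_le|->] //; right.
Qed.

Lemma log2_diff_ge_iff (d a b : nat) : (0 < a)%nat -> (0 < b)%nat ->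
  log2 (INR d) - log2 (INR b) >= log2 (INR d) - log2 (INR a) <-> (b <= a)%nat.
Proof. by move=> a_gt0 b_gt0; rewrite -log2_le_iff //; split => ?; lra. Qed.

End Log2.

Section ValueFunction.
Import Rdefinitions Raxioms RIneq.
Context {C : numClosedFieldType} {d : nat}.
Hypothesis d_gt0 : (0 < d)%nat.
Local Open Scope R_scope.

Definition C2_value (V : mset C d) : R :=
  log2 (INR d) - log2 (INR (ClassicalEpsilon.epsilon (inhabits 0%nat) (fun k => C2_at k V))).

Lemma C2_valueE k V : C2_at k V -> C2_value V = log2 (INR d) - log2 (INR k).
Proof.
move=> Vk; rewrite /C2_value; congr (_ - log2 (INR _)).
by apply: (C2_at_inj d_gt0 _ Vk); apply: (ClassicalEpsilon.epsilon_spec _ (C2_at^~ V)); exists k.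
Qed.

Lemma C2_value_function (Val : mset C d -> R) :
  (forall k V, C2_at k V -> Val V = log2 (INR d) - log2 (INR k)) ->
  value_function (@C2fam C d) Val.
Proof.
move=> ValE; split; last split.
- move=> V /C2famP[k Vk]; have /andP[k_gt0 kd] := C2_at_range d_gt0 Vk.
  rewrite (ValE _ _ Vk); apply: Rge_le.
  by have := proj2 (log2_diff_ge_iff d d_gt0 k_gt0) kd; rewrite Rminus_diag.
- move=> V W /C2famP[a Va] /C2famP[b Wb].
  have [/andP[a_gt0 _] /andP[b_gt0 _]] := (C2_at_range d_gt0 Va, C2_at_range d_gt0 Wb).
  by rewrite (ValE _ _ Va) (ValE _ _ Wb) log2_diff_ge_iff // (arrow_C2_atP d_gt0 Wb Va).
by rewrite (ValE d) ?Rminus_diag //; right.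
Qed.

End ValueFunction.

Theorem mainTheorem16 (C : numClosedFieldType) (d : nat) (hd : (0 < d)%N) :
  (forall k : nat, (1 <= k <= d)%N ->
     @arrow C d (@Ck C d k) (@C2k C d k) /\ @arrow C d (@C2k C d k) (@Ck C d k)) /\
  @currency C d (@C2fam C d) (@SOmega C d) /\
  (exists Val : mset C d -> Rdefinitions.R,
     Val (@Omega C d) = Rdefinitions.R0 /\
     forall k : nat, (1 <= k <= d)%N ->
       Val (@C2k C d k) =
         Rdefinitions.Rminus (log2 (Raxioms.INR d)) (log2 (Raxioms.INR k))) /\
  (forall Val : mset C d -> Rdefinitions.R,
     Val (@Omega C d) = Rdefinitions.R0 ->
     (forall k : nat, (1 <= k <= d)%N ->
       Val (@C2k C d k) =
         Rdefinitions.Rminus (log2 (Raxioms.INR d)) (log2 (Raxioms.INR k))) ->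
     @value_function C d (@C2fam C d) Val).
Proof.
split; first by move=> k; apply: arrow_Ck_C2k_equiv.
split; first exact: C2fam_currency.
have C2_at_Omega : C2_at d (@Omega C d) by right.
split.
  exists C2_value; split; first by rewrite (C2_valueE hd C2_at_Omega) RIneq.Rminus_diag.
  by move=> k hk; apply: (C2_valueE hd); left.
move=> Val Val0 ValC2k; apply: C2_value_function => // k V [[hk ->]|[-> ->]].
  exact: ValC2k.
by rewrite Val0 RIneq.Rminus_diag.
Qed.
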